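(* Let $G=(V,E)$ be a graph, $d\geq 1$, and let $\{u,v\}$ be an $\mathcal{R}_d$-loose vertex pair of $G$. Suppose that $F$ is a set of new edges on $V$ (pairs of vertices not adjacent in $G$) with $uv\notin F$. Then $\{u,v\}$ is $\mathcal{R}_{d+|F|}$-loose in $G+F$.
   Context: For a graph $G$, $\mathcal{R}_d(G)$ is the $d$-dimensional generic rigidity matroid on $E(G)$ (linear independence of rows of the rigidity matrix of a generic $d$-dimensional framework of $G$, i.e. one whose coordinates are algebraically independent over $\mathbb{Q}$), with rank function $r_d$; $r_d(H)$ denotes the rank of $E(H)$. A non-adjacent vertex pair $\{u,v\}$ of $G$ is $\mathcal{R}_d$-loose if $r_d(G+uv)=r_d(G)+1$, and $\mathcal{R}_d$-linked if $r_d(G+uv)=r_d(G)$. *)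

From HB Require Import structures.
From mathcomp Require Import all_boot all_order all_algebra.
From mathcomp Require Import reals.
From mathcomp Require Import mpoly.
Set Implicit Arguments. Unset Strict Implicit. Unset Printing Implicit Defensive.
Import GRing.Theory Num.Theory.
Local Open Scope ring_scope.

Definition simple_edges (V : finType) (E : {set {set V}}) : Prop :=
  forall e, e \in E -> #|e| = 2%N.

Definition coord (R : Type) (V : finType) (d : nat) (p : V -> 'rV[R]_d)
  (c : V * 'I_d) : R := p c.1 0 c.2.

(* Generic framework: all coordinates algebraically independent over Q,
   i.e. no nonzero rational polynomial in the #|V|*d coordinates vanishes. *)
Definition generic (R : realType) (V : finType) (d : nat) (p : V -> 'rV[R]_d) : Prop :=
  forall P : mpoly.mpoly #|{: V * 'I_d}| rat, P != 0 ->
    mpoly.meval (fun j => coord p (enum_val j)) (mpoly.map_mpoly (fun q : rat => ratr q) P) != 0.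

(* Rows are indexed by all subsets of V (rows of
   non-edges are zero, which does not affect the rank); the row of an edge
   e = {a, b} has entry p(a)_i - p(b)_i in column (a, i), p(b)_i - p(a)_i in
   column (b, i), and 0 elsewhere.  For w \in e the sum below equals
   p(w)_i - p(w')_i where e = {w, w'}. *)
Definition rigidity_matrix (R : fieldType) (V : finType) (d : nat)
  (E : {set {set V}}) (p : V -> 'rV[R]_d) : 'M[R]_(#|{: {set V}}|, #|{: V * 'I_d}|) :=
  \matrix_(k, c)
    (let e := enum_val k in let wi := enum_val c in
     if (e \in E) && (wi.1 \in e) then \sum_(x in e) (p wi.1 0 wi.2 - p x 0 wi.2)
     else 0).

(* rank of E in the d-dimensional generic rigidity matroid, as realised by the
   generic framework p (independent of the choice of generic p). *)
Definition rank_at (R : realType) (V : finType) (d : nat)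
  (E : {set {set V}}) (p : V -> 'rV[R]_d) : nat := \rank (rigidity_matrix E p).

Definition Rd_loose (R : realType) (V : finType) (d : nat)
  (E : {set {set V}}) (u v : V) : Prop :=
  [/\ u != v, [set u; v] \notin E &
      forall p : V -> 'rV[R]_d, generic p ->
        rank_at (E :|: [set [set u; v]]) p = (rank_at E p).+1 ].

(* Induction on |F| reduces the theorem to adding one edge f and one dimension.
   Choose an endpoint a of f outside {u, v} and let K be E + f together with all
   edges at a, so that K is the cone with apex a over K - a, and K - a is a
   subgraph of E.  Coning transfers looseness one dimension up: placing a at the
   origin and every other vertex x at (y x, 1) for a generic d-dimensional y shows
   dim motions (K + uv) <= dim motions (K - a + uv) + 1, while projecting a generic
   (d+1)-dimensional framework centrally from a and lifting motions back shows
   dim motions (K - a) + 1 <= dim motions K.  Hence uv, loose in K - a in dimension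
   d, is loose in K in dimension d+1, and by submodularity of the rank of the
   rigidity matrix also in E + f. *)

From Pilot Require Import Defs.
From HB Require Import structures.
From mathcomp Require Import all_boot all_order all_algebra.
From mathcomp Require Import reals.
From mathcomp Require Import mpoly.
From mathcomp Require Import ring zify.
Set Implicit Arguments. Unset Strict Implicit. Unset Printing Implicit Defensive.
Import GRing.Theory Num.Theory.
Local Open Scope ring_scope.

Definition star (V : finType) (a : V) : {set {set V}} :=
  [set e : {set V} | (a \in e) && (#|e| == 2)%N].

Definition del_vertex (V : finType) (K : {set {set V}}) (a : V) : {set {set V}} :=
  [set e in K | a \notin e].

Lemma simple_edges_del_vertex (V : finType) (K : {set {set V}}) (a : V) :
  simple_edges K -> simple_edges (del_vertex K a).
Proof. by move=> simK e /setIdP[/simK]. Qed.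

Section Motions.
Variables (R : fieldType) (V : finType) (m : nat).
Local Notation N := #|{: V * 'I_m}|.
Implicit Types (X Y : {set {set V}}) (p : V -> 'rV[R]_m) (w : 'rV[R]_N).

Definition velocity w (x : V) (j : 'I_m) : R := w 0 (enum_rank (x, j)).

Definition motion_of (f : V -> 'I_m -> R) : 'rV[R]_N :=
  \row_c f (enum_val c).1 (enum_val c).2.

Lemma velocity_motion_of f x j : velocity (motion_of f) x j = f x j.
Proof. by rewrite /velocity mxE enum_rankK. Qed.

Lemma velocity_ext w w' : (forall x j, velocity w x j = velocity w' x j) -> w = w'.
Proof.
move=> eq_w; apply/rowP => c.
by rewrite -[c]enum_valK [enum_val c]surjective_pairing; apply: eq_w.
Qed.

Lemma velocityD w w' x j : velocity (w + w') x j = velocity w x j + velocity w' x j.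
Proof. by rewrite /velocity mxE. Qed.

Lemma velocityZ k w x j : velocity (k *: w) x j = k * velocity w x j.
Proof. by rewrite /velocity mxE. Qed.

Lemma velocity0 x j : velocity 0 x j = 0.
Proof. by rewrite /velocity mxE. Qed.

Lemma sum_vertex_coord (F : 'I_N -> R) :
  \sum_c F c = \sum_x \sum_(j < m) F (enum_rank (x, j)).
Proof.
rewrite (reindex (@enum_rank _)) /=; last exact/onW_bij/enum_rank_bij.
by rewrite pair_big; apply: eq_bigr => -[].
Qed.

Definition edge_form p w x y : R :=
  \sum_(i < m) (p x 0 i - p y 0 i) * (velocity w x i - velocity w y i).

Lemma eq_edge_form p p' w x y : p x = p' x -> p y = p' y ->
  edge_form p w x y = edge_form p' w x y.
Proof. by rewrite /edge_form => -> ->. Qed.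

Lemma edge_form0 p x y : edge_form p 0 x y = 0.
Proof. by apply: big1 => i _; rewrite !velocity0 subrr mulr0. Qed.

Lemma mul_rigidity_matrix_tr X p w x y : [set x; y] \in X -> x != y ->
  (w *m (rigidity_matrix X p)^T) 0 (enum_rank [set x; y]) = edge_form p w x y.
Proof.
move=> xyX neq_xy; rewrite mxE sum_vertex_coord (bigD1 x) //= (bigD1 y) 1?eq_sym //=.
rewrite addrA [X in _ + X]big1 ?addr0 => [|z /andP[zx zy]]; last first.
  by apply: big1 => j _; rewrite !mxE !enum_rankK /= xyX !inE (negbTE zx) (negbTE zy) mulr0.
rewrite -big_split; apply: eq_bigr => i _ /=.
rewrite !mxE !enum_rankK /= xyX !inE !eqxx orbT /=.
by rewrite !big_setU1 ?inE //= !big_set1 /velocity !subrr; ring.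
Qed.

Definition motions X p := kermx (rigidity_matrix X p)^T.

Lemma motionsP X p w : simple_edges X ->
  reflect (forall x y, [set x; y] \in X -> x != y -> edge_form p w x y = 0)
          (w <= motions X p)%MS.
Proof.
move=> simX; apply: (iffP sub_kermxP) => [w0 x y xyX neq_xy | w0].
  by rewrite -(mul_rigidity_matrix_tr p w xyX neq_xy) w0 mxE.
apply/rowP => k; rewrite [RHS]mxE.
case kX: (enum_val k \in X); last first.
  by rewrite mxE big1 // => c _; rewrite !mxE /= kX mulr0.
have /eqP/cards2P[x [y [neq_xy def_k]]] := simX _ kX.
have xyX : [set x; y] \in X by rewrite -def_k.
by rewrite -[k]enum_valK def_k mul_rigidity_matrix_tr // w0.
Qed.

Lemma mxrank_motions X p :
  \rank (motions X p) = (N - \rank (rigidity_matrix X p))%N.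
Proof. by rewrite mxrank_ker mxrank_tr. Qed.

Lemma translation_motion X p (c : 'I_m -> R) : simple_edges X ->
  (motion_of (fun=> c) <= motions X p)%MS.
Proof.
move=> simX; apply/motionsP => // x y _ _.
by apply: big1 => i _; rewrite !velocity_motion_of subrr mulr0.
Qed.

Lemma row_rigidity_matrix X p k :
  row k (rigidity_matrix X p) =
  if enum_val k \in X then row k (rigidity_matrix [set: {set V}] p) else 0.
Proof. by apply/rowP => c; rewrite !mxE; case: ifP => kX; rewrite ?mxE /= ?kX ?inE. Qed.

Lemma rigidity_matrixS X Y p : X \subset Y ->
  (rigidity_matrix X p <= rigidity_matrix Y p)%MS.
Proof.
move=> sXY; apply/row_subP => k; rewrite row_rigidity_matrix.
case: ifP => [kX|_]; last exact: sub0mx.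
by have := row_rigidity_matrix Y p k; rewrite (subsetP sXY _ kX) => <-; apply: row_sub.
Qed.

Lemma rigidity_matrixU X Y p :
  (rigidity_matrix (X :|: Y) p :=: rigidity_matrix X p + rigidity_matrix Y p)%MS.
Proof.
apply/eqmxP/andP; split; last by rewrite addsmx_sub !rigidity_matrixS ?subsetUl ?subsetUr.
apply/row_subP => k; rewrite row_rigidity_matrix inE.
case kX: (enum_val k \in X) => /=.
  by have := row_rigidity_matrix X p k; rewrite kX => <-; apply/submx_trans/addsmxSl/row_sub.
case kY: (enum_val k \in Y); last exact: sub0mx.
by have := row_rigidity_matrix Y p k; rewrite kY => <-; apply/submx_trans/addsmxSr/row_sub.
Qed.

Lemma mxrank_rigidity_matrix1 e p : (\rank (rigidity_matrix [set e] p) <= 1)%N.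
Proof.
apply: leq_trans (rank_leq_row (row (enum_rank e) (rigidity_matrix [set e] p))).
apply/mxrankS/row_subP => k; rewrite row_rigidity_matrix inE.
have [def_e | _] := eqVneq (enum_val k) e; last exact: sub0mx.
have := row_rigidity_matrix [set e] p k; rewrite inE def_e eqxx => <-.
by rewrite -def_e enum_valK.
Qed.

Lemma mxrank_rigidity_submod X Y e p : X \subset Y ->
  (\rank (rigidity_matrix (Y :|: [set e]) p) + \rank (rigidity_matrix X p)
   <= \rank (rigidity_matrix (X :|: [set e]) p) + \rank (rigidity_matrix Y p))%N.
Proof.
move=> sXY; rewrite !rigidity_matrixU.
have := mxrank_sum_cap (rigidity_matrix X p) (rigidity_matrix [set e] p).
have := mxrank_sum_cap (rigidity_matrix Y p) (rigidity_matrix [set e] p).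
have : (\rank (rigidity_matrix X p :&: rigidity_matrix [set e] p)
        <= \rank (rigidity_matrix Y p :&: rigidity_matrix [set e] p))%N.
  by apply/mxrankS/capmxS => //; apply: rigidity_matrixS.
lia.
Qed.

Lemma mxrank_rigidity_setU1_le X e p :
  (\rank (rigidity_matrix (X :|: [set e]) p) <= (\rank (rigidity_matrix X p)).+1)%N.
Proof.
rewrite rigidity_matrixU -addn1.
have := mxrank_sum_cap (rigidity_matrix X p) (rigidity_matrix [set e] p).
have := mxrank_rigidity_matrix1 e p; lia.
Qed.

Lemma mxrank_rigidity_setU1_succ X Y e p : X \subset Y ->
  \rank (rigidity_matrix (Y :|: [set e]) p) = (\rank (rigidity_matrix Y p)).+1 ->
  \rank (rigidity_matrix (X :|: [set e]) p) = (\rank (rigidity_matrix X p)).+1.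
Proof.
move=> sXY incY; have := mxrank_rigidity_submod e p sXY.
have := mxrank_rigidity_setU1_le X e p; lia.
Qed.

End Motions.

Section LastCoordinate.
Variables (R : fieldType) (V : finType) (d : nat).
Local Notation widen := (widen_ord (leqnSn d)).
Local Notation Nd := #|{: V * 'I_d}|.
Local Notation ND := #|{: V * 'I_d.+1}|.

Lemma widen_ord_max (i : 'I_d) : widen i = lift ord_max i.
Proof. by apply: ord_inj; rewrite lift_max. Qed.

Lemma unlift_max_widen (i : 'I_d) : unlift ord_max (widen i) = Some i.
Proof. by rewrite widen_ord_max liftK. Qed.

Definition drop_last (p : V -> 'rV[R]_d.+1) (x : V) : 'rV[R]_d :=
  \row_i p x 0 (widen i).

Definition restrict (w : 'rV[R]_ND) : 'rV[R]_Nd :=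
  motion_of (fun x i => velocity w x (widen i)).

Lemma velocity_restrict w x i : velocity (restrict w) x i = velocity w x (widen i).
Proof. exact: velocity_motion_of. Qed.

Fact restrict_is_linear : linear restrict.
Proof.
move=> k w w'; apply: velocity_ext => x i.
by rewrite velocityD velocityZ !velocity_restrict velocityD velocityZ.
Qed.

HB.instance Definition _ := GRing.isLinear.Build R _ _ _ restrict restrict_is_linear.

Lemma edge_form_recr p w x y : edge_form p w x y =
  edge_form (drop_last p) (restrict w) x y +
  (p x 0 ord_max - p y 0 ord_max) * (velocity w x ord_max - velocity w y ord_max).
Proof.
rewrite /edge_form big_ord_recr; congr (_ + _).
by apply: eq_bigr => i _; rewrite !mxE !velocity_restrict.
Qed.

End LastCoordinate.

Arguments restrict {R V d}.

Section Coning.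
Variables (R : fieldType) (V : finType) (d : nat) (a : V).
Local Notation widen := (widen_ord (leqnSn d)).
Local Notation Nd := #|{: V * 'I_d}|.
Local Notation ND := #|{: V * 'I_d.+1}|.
Implicit Types (K : {set {set V}}) (y : V -> 'rV[R]_d).

Definition vertical_translation : 'rV[R]_ND := motion_of (fun _ j => (j == ord_max)%:R).

Definition cone_frame y (x : V) : 'rV[R]_d.+1 :=
  if x == a then 0 else \row_j (if unlift ord_max j is Some i then y x 0 i else 1).

Lemma drop_last_cone_frame y x : x != a -> drop_last (cone_frame y) x = y x.
Proof.
by move=> xa; apply/rowP => i; rewrite /cone_frame mxE (negbTE xa) mxE unlift_max_widen.
Qed.

Lemma cone_frame_last y x : cone_frame y x 0 ord_max = (x != a)%:R.
Proof. by rewrite /cone_frame; case: eqP => _; rewrite ?mxE ?unlift_none. Qed.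

Lemma restrict_cone_motion K y w : simple_edges K ->
  (w <= motions K (cone_frame y))%MS -> (restrict w <= motions (del_vertex K a) y)%MS.
Proof.
move=> simK /motionsP-/(_ simK) wK.
apply/motionsP; first exact: simple_edges_del_vertex.
move=> x x' /setIdP[xx'K].
rewrite !inE negb_or ![a == _]eq_sym => /andP[xa x'a] neq_xx'.
rewrite -(eq_edge_form _ (drop_last_cone_frame _ xa) (drop_last_cone_frame _ x'a)).
have := wK x x' xx'K neq_xx'.
by rewrite edge_form_recr !cone_frame_last xa x'a subrr mul0r addr0.
Qed.

Lemma cone_motion_restrict0 K y v : simple_edges K -> star a \subset K ->
  (v <= motions K (cone_frame y))%MS -> restrict v = 0 ->
  v = velocity v a ord_max *: vertical_translation.
Proof.
move=> simK starK /motionsP-/(_ simK) vK v0.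
apply: velocity_ext => x j; rewrite velocityZ velocity_motion_of.
case: (unliftP ord_max j) => [i ->|->].
  rewrite -widen_ord_max -velocity_restrict v0 velocity0 widen_ord_max.
  by rewrite eq_sym (negbTE (neq_lift _ _)) mulr0.
rewrite eqxx mulr1; have [-> // | xa] := eqVneq x a.
have /vK : [set a; x] \in K by apply: (subsetP starK); rewrite !inE cards2 eqxx eq_sym xa.
rewrite eq_sym xa edge_form_recr v0 edge_form0 !cone_frame_last eqxx xa /=.
rewrite add0r sub0r mulr1n mulN1r.
by move/(_ isT)/eqP; rewrite oppr_eq0 subr_eq0 => /eqP.
Qed.

Lemma mxrank_motions_cone_frame K y : simple_edges K -> star a \subset K ->
  (\rank (motions K (cone_frame y)) <= \rank (motions (del_vertex K a) y) + 1)%N.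
Proof.
move=> simK starK; set Z := motions K (cone_frame y).
rewrite -(mxrank_mul_ker Z (lin1_mx restrict)); apply: leq_add.
  apply/mxrankS/row_subP => r; rewrite row_mul mul_rV_lin1.
  exact/restrict_cone_motion/row_sub.
apply: leq_trans (rank_leq_row vertical_translation).
apply/mxrankS/row_subP => r; set v := row r _.
have vZ : (v <= Z)%MS by apply: submx_trans (row_sub _ _) (capmxSl _ _).
have /sub_kermxP : (v <= kermx (lin1_mx restrict))%MS.
  by apply: submx_trans (row_sub _ _) (capmxSr _ _).
rewrite mul_rV_lin1 => v0.
by rewrite (cone_motion_restrict0 simK starK vZ v0) scalemx_sub.
Qed.

Section CentralProjection.
Variable q : V -> 'rV[R]_d.+1.

Definition height x := q x 0 ord_max - q a 0 ord_max.

Lemma height_apex : height a = 0.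
Proof. exact: subrr. Qed.

Hypothesis height_neq0 : forall x, x != a -> height x != 0.

Definition central_proj x : 'rV[R]_d :=
  \row_i ((q x 0 (widen i) - q a 0 (widen i)) / height x).

Lemma central_projE x i :
  q x 0 (widen i) = q a 0 (widen i) + height x * central_proj x 0 i.
Proof.
have [-> | xa] := eqVneq x a; first by rewrite height_apex mul0r addr0.
by rewrite mxE mulrC divfK ?height_neq0 // addrC subrK.
Qed.

(* Since [q x = q a + height x * (central_proj x, 1)], this velocity keeps the
   edges at [a] rigid and scales the edge form of [x y] by [height x * height y];
   [height a = 0] makes the apex move by [(w a, 0)]. *)
Definition cone_lift (w : 'rV[R]_Nd) : 'rV[R]_ND :=
  motion_of (fun x j => if unlift ord_max j is Some i
                        then velocity w a i + height x * velocity w x i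
                        else - (height x * \sum_i central_proj x 0 i * velocity w x i)).

Lemma velocity_cone_lift w x i :
  velocity (cone_lift w) x (widen i) = velocity w a i + height x * velocity w x i.
Proof. by rewrite velocity_motion_of unlift_max_widen. Qed.

Lemma velocity_cone_lift_last w x : velocity (cone_lift w) x ord_max =
  - (height x * \sum_i central_proj x 0 i * velocity w x i).
Proof. by rewrite velocity_motion_of unlift_none. Qed.

Fact cone_lift_is_linear : linear cone_lift.
Proof.
move=> k w w'; apply: velocity_ext => x j.
rewrite velocityD velocityZ !velocity_motion_of.
case: (unlift ord_max j) => [i|]; first by rewrite !velocityD !velocityZ; ring.
under eq_bigr do rewrite velocityD velocityZ mulrDr mulrCA.
by rewrite big_split -mulr_sumr /=; ring.
Qed.

HB.instance Definition _ := GRing.isLinear.Build R _ _ _ cone_lift cone_lift_is_linear.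

Lemma edge_form_cone_lift w x x' :
  edge_form q (cone_lift w) x x' = height x * height x' * edge_form central_proj w x x'.
Proof.
rewrite edge_form_recr !velocity_cone_lift_last.
have -> : q x 0 ord_max - q x' 0 ord_max = height x - height x' by rewrite /height; ring.
rewrite /edge_form; under eq_bigr do
  rewrite !mxE !velocity_restrict !velocity_cone_lift (central_projE x) (central_projE x').
rewrite !mulr_sumr -!sumrN -big_split mulr_sumr -big_split /=.
by apply: eq_bigr => i _; ring.
Qed.

Lemma cone_lift_motion K w : simple_edges K ->
  (w <= motions (del_vertex K a) central_proj)%MS -> (cone_lift w <= motions K q)%MS.
Proof.
move=> simK /motionsP-/(_ (simple_edges_del_vertex simK)) wH.
apply/motionsP => // x x' xx'K neq_xx'; rewrite edge_form_cone_lift.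
have [-> | xa] := eqVneq x a; first by rewrite height_apex !mul0r.
have [-> | x'a] := eqVneq x' a; first by rewrite height_apex mulr0 mul0r.
by rewrite wH ?mulr0 // !inE negb_or ![a == _]eq_sym xa x'a xx'K.
Qed.

Lemma cone_lift_free : row_free (lin1_mx cone_lift).
Proof.
apply: inj_row_free => v; rewrite mul_rV_lin1 => v0.
have va i : velocity v a i = 0.
  by have := velocity_cone_lift v a i; rewrite v0 velocity0 height_apex mul0r addr0.
apply: velocity_ext => x i; rewrite velocity0.
have [-> // | xa] := eqVneq x a.
have /esym/eqP := velocity_cone_lift v x i; rewrite v0 velocity0 va add0r.
by rewrite mulf_eq0 (negbTE (height_neq0 xa)) => /eqP.
Qed.

Definition apex_vertical_velocity (w : 'rV[R]_ND) : 'rV[R]_1 :=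
  \row_(_ < 1) velocity w a ord_max.

Fact apex_vertical_velocity_is_linear : linear apex_vertical_velocity.
Proof. by move=> k w w'; apply/rowP => i; rewrite !mxE velocityD velocityZ. Qed.

HB.instance Definition _ := GRing.isLinear.Build R _ _ _ apex_vertical_velocity
  apex_vertical_velocity_is_linear.

Lemma mxrank_motions_central_proj K : simple_edges K ->
  (\rank (motions (del_vertex K a) central_proj) + 1 <= \rank (motions K q))%N.
Proof.
move=> simK; set Z := motions K q.
rewrite -(mxrank_mul_ker Z (lin1_mx apex_vertical_velocity)) addnC; apply: leq_add.
  have tZ : (vertical_translation <= Z)%MS by apply: translation_motion.
  apply: leq_trans (mxrankS (submxMr _ tZ)); rewrite mul_rV_lin1 lt0n mxrank_eq0.
  by apply/eqP => /rowP/(_ 0)/eqP; rewrite !mxE velocity_motion_of eqxx oner_eq0.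
rewrite -(mxrankMfree _ cone_lift_free); apply/mxrankS/row_subP => r.
rewrite row_mul mul_rV_lin1 sub_capmx cone_lift_motion ?row_sub //=.
apply/sub_kermxP; rewrite mul_rV_lin1; apply/rowP => i.
by rewrite !mxE velocity_cone_lift_last height_apex mul0r oppr0.
Qed.

End CentralProjection.

End Coning.

Lemma comp_mpolyA (R : comRingType) n k l (p : {mpoly R[n]})
    (lq : n.-tuple {mpoly R[k]}) (lr : k.-tuple {mpoly R[l]}) :
  (p \mPo lq) \mPo lr = p \mPo [tuple tnth lq i \mPo lr | i < n].
Proof.
rewrite (comp_mpolyEX p lq) raddf_sum (comp_mpolyEX p).
apply: eq_bigr => mo _ /=; rewrite comp_mpolyZ; congr (_ *: _).
rewrite !comp_mpolyX rmorph_prod; apply: eq_bigr => i _.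
by rewrite rmorphXn tnth_map tnth_ord_tuple.
Qed.

Section Genericity.
Variables (R : realType) (V : finType).

Section FixedDimension.
Variable m : nat.
Local Notation N := #|{: V * 'I_m}|.
Implicit Types (X : {set {set V}}) (g p : V -> 'rV[R]_m).

Definition eval_frame (p : V -> 'rV[R]_m) : {rmorphism {mpoly rat[N]} -> R} :=
  meval (fun j => Defs.coord p (enum_val j)) \o map_mpoly ratr.

Lemma generic_eval_neq0 g p (P : {mpoly rat[N]}) :
  generic g -> eval_frame p P != 0 -> eval_frame g P != 0.
Proof. by move=> gen_g evP; apply: gen_g; apply: contraNneq evP => ->; rewrite rmorph0. Qed.

Lemma mxrank_eval_generic r c (M : 'M[{mpoly rat[N]}]_(r, c)) g p : generic g ->
  (\rank (map_mx (eval_frame p) M) <= \rank (map_mx (eval_frame g) M))%N.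
Proof.
(* A nonsingular maximal minor at p is a polynomial with nonzero value at p. *)
move=> gen_g; set A := map_mx (eval_frame p) M.
have fullA : row_full (rowsub (maxrankfun A) A)^T.
  by rewrite /row_full mxrank_tr; apply: maxrowsub_free.
pose minor T (B : 'M[T]_(r, c)) := rowsub (fullrankfun fullA) (rowsub (maxrankfun A) B)^T.
have minor_map (f : {rmorphism {mpoly rat[N]} -> R}) :
    minor _ (map_mx f M) = map_mx f (minor _ M).
  by rewrite /minor map_mxsub -map_trmx map_mxsub.
have := fullrowsub_unit fullA; rewrite -/(minor _ A) minor_map.
rewrite unitmxE det_map_mx unitfE => /(generic_eval_neq0 gen_g).
rewrite -det_map_mx -unitfE -unitmxE -minor_map => /mxrank_unit <-.
by rewrite (leq_trans (mxrankS (rowsub_sub _ _))) // mxrank_tr mxrankS ?rowsub_sub.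
Qed.

Definition rigidity_matrix_sym (X : {set {set V}}) :
    'M[{mpoly rat[N]}]_(#|{: {set V}}|, N) :=
  \matrix_(k, c)
    (let e := enum_val k in let wi := enum_val c in
     if (e \in X) && (wi.1 \in e) then \sum_(x in e) ('X_c - 'X_(enum_rank (x, wi.2)))
     else 0).

Lemma rigidity_matrix_eval X p :
  rigidity_matrix X p = map_mx (eval_frame p) (rigidity_matrix_sym X).
Proof.
apply/matrixP => k c; rewrite !mxE; cbv zeta; case: ifP => _; last by rewrite rmorph0.
rewrite rmorph_sum; apply: eq_bigr => x _.
by rewrite rmorphB /= !map_mpolyX !mevalXU /Defs.coord enum_rankK.
Qed.

Lemma mxrank_motions_generic X g p : generic g ->
  (\rank (motions X g) <= \rank (motions X p))%N.
Proof.
move=> gen_g; rewrite !mxrank_motions; apply: leq_sub2l.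
by rewrite !rigidity_matrix_eval; apply: mxrank_eval_generic.
Qed.

Lemma generic_coord_neq g x y j : generic g -> x != y -> g x 0 j - g y 0 j != 0.
Proof.
move=> gen_g neq_xy.
pose P : {mpoly rat[N]} := 'X_(enum_rank (x, j)) - 'X_(enum_rank (y, j)).
have /gen_g : P != 0.
  apply/eqP => /(congr1 (mcoeff U_(enum_rank (x, j)))).
  rewrite mcoeffB !mcoeffXU eqxx mcoeff0.
  have /negbTE -> : enum_rank (y, j) != enum_rank (x, j).
    by apply: contra neq_xy => /eqP/enum_rank_inj[->].
  by move/eqP; rewrite subr0 oner_eq0.
by rewrite raddfB /= !map_mpolyX mevalB !mevalXU /Defs.coord !enum_rankK.
Qed.

End FixedDimension.

Lemma generic_drop_last d (q : V -> 'rV[R]_d.+1) : generic q -> generic (drop_last q).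
Proof.
move=> gen_q P nzP.
pose lq := [tuple 'X_(enum_rank ((enum_val j).1, widen_ord (leqnSn d) (enum_val j).2))
             | j < #|{: V * 'I_d}|] : _.-tuple {mpoly rat[#|{: V * 'I_d.+1}|]}.
pose lr := [tuple if unlift ord_max (enum_val c).2 is Some i
                  then 'X_(enum_rank ((enum_val c).1, i)) else 0
             | c < #|{: V * 'I_d.+1}|] : _.-tuple {mpoly rat[#|{: V * 'I_d}|]}.
have lqK : (P \mPo lq) \mPo lr = P.
  rewrite comp_mpolyA -[RHS]comp_mpoly_id; congr (P \mPo _).
  apply: eq_from_tnth => j; rewrite !tnth_map !tnth_ord_tuple comp_mpolyXU -tnth_nth.
  rewrite tnth_map tnth_ord_tuple enum_rankK /= unlift_max_widen.
  by rewrite -surjective_pairing enum_valK.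
have /gen_q : P \mPo lq != 0.
  by apply: contraNneq nzP => lq0; rewrite -lqK lq0 comp_mpoly0.
rewrite map_mpoly_comp; last exact: fmorph_inj.
rewrite comp_mpoly_meval; congr (_ != 0); apply: meval_eq => j.
by rewrite !tnth_map tnth_ord_tuple map_mpolyX mevalXU /Defs.coord enum_rankK /= mxE.
Qed.

End Genericity.

Lemma rank_at_cone_setU1_succ (R : realType) (V : finType) d (K : {set {set V}}) (a u v : V)
    (q : V -> 'rV[R]_d.+1) :
  simple_edges K -> star a \subset K -> u != v -> u != a -> v != a -> generic q ->
  rank_at (del_vertex K a :|: [set [set u; v]]) (drop_last q) =
    (rank_at (del_vertex K a) (drop_last q)).+1 ->
  rank_at (K :|: [set [set u; v]]) q = (rank_at K q).+1.
Proof.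
move=> simK starK neq_uv ua va gen_q; rewrite /rank_at.
set uv := [set [set u; v]]; set H := del_vertex K a; set y := drop_last q => incH.
have simKuv : simple_edges (K :|: uv).
  by move=> e /setUP[/simK // | /set1P ->]; rewrite cards2 neq_uv.
have delKuv : del_vertex (K :|: uv) a = H :|: uv.
  apply/setP => e; rewrite !inE; have [-> | _] := eqVneq e [set u; v]; last by rewrite !orbF.
  by rewrite !orbT !inE negb_or ![a == _]eq_sym ua va.
have height_neq0 x : x != a -> height a q x != 0 by move=> xa; apply: generic_coord_neq.
(* dim motions is generically minimal, so the chain
   motions (K + uv) q <= motions (K + uv) (cone_frame y) <= motions (H + uv) y + 1
   = motions H y <= motions H (central_proj q) <= motions K q - 1 gives the claim. *)
have := mxrank_motions_generic (K :|: uv) (cone_frame a y) gen_q.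
have := mxrank_motions_cone_frame y simKuv (subset_trans starK (subsetUl _ _)).
have := mxrank_motions_generic H (central_proj a q) (generic_drop_last gen_q).
have := mxrank_motions_central_proj height_neq0 simK.
rewrite delKuv !mxrank_motions -/H -/y.
have := mxrank_rigidity_setU1_le K [set u; v] q; rewrite -/uv.
have := rank_leq_col (rigidity_matrix (H :|: uv) y).
lia.
Qed.

Lemma Rd_loose_setU1 (R : realType) (V : finType) (E : {set {set V}}) d (u v : V)
    (f : {set V}) :
  simple_edges E -> Rd_loose R d E u v -> #|f| = 2%N -> f \notin E -> f != [set u; v] ->
  Rd_loose R d.+1 (E :|: [set f]) u v.
Proof.
move=> simE [neq_uv uvNE looseE] f2 fNE neq_f.
have /subsetPn[a af] : ~~ (f \subset [set u; v]).
  by apply: contra neq_f => sub_f; rewrite eqEcard sub_f f2 cards2 ltnS leq_b1.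
rewrite !inE negb_or ![a == _]eq_sym => /andP[ua va].
split=> //; first by rewrite !inE negb_or uvNE eq_sym.
move=> q gen_q; pose K := E :|: [set f] :|: star a.
have simK : simple_edges K.
  by move=> e; rewrite !inE -orbA => /or3P[/simE | /eqP -> | /andP[_ /eqP]].
have HE : del_vertex K a \subset E.
  apply/subsetP => e /setIdP[]; rewrite !inE -orbA => /or3P[// | /eqP -> | /andP[ae _]].
    by rewrite af.
  by rewrite ae.
rewrite /rank_at; apply: (mxrank_rigidity_setU1_succ (subsetUl _ (star a))).
apply: (rank_at_cone_setU1_succ simK (subsetUr _ _) neq_uv ua va gen_q).
exact: mxrank_rigidity_setU1_succ HE (looseE _ (generic_drop_last gen_q)).
Qed.

Theorem lemma2p6 (R : realType) (V : finType) (E F : {set {set V}})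
  (d : nat) (u v : V) :
  simple_edges E -> (0 < d)%N ->
  Rd_loose R d E u v ->
  simple_edges F -> [disjoint E & F] -> [set u; v] \notin F ->
  Rd_loose R (d + #|F|) (E :|: F) u v.
Proof.
move=> simE _ looseE.
have [n] := ubnP #|F|; elim: n F => // n IHn F; rewrite ltnS => leFn simF disjEF uvNF.
have [-> | [f fF]] := set_0Vmem F; first by rewrite setU0 cards0 addn0.
set F' := F :\ f.
have simF' : simple_edges F' by move=> e /setD1P[_ /simF].
have disjEF' : [disjoint E & F'] by apply: disjointWr disjEF; apply: subD1set.
have uvNF' : [set u; v] \notin F' by rewrite inE negb_and uvNF orbT.
rewrite -(setD1K fF) cardsU1 setD11 add1n addnS setUCA setUC.
apply: Rd_loose_setU1; last by apply: contraNneq uvNF => <-.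
- by move=> e /setUP[/simE | /simF'].
- by apply: IHn => //; apply: leq_trans leFn; rewrite (cardsD1 f F) fF.
- exact: simF.
- by rewrite in_setU setD11 orbF (disjointFl disjEF fF).
Qed.
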